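(* Let $E$ be a linear subspace of $\mathbb{R}^n$ and $p_E$ the orthogonal projection onto $E$. Let $\mu$ be a Borel probability measure on $\mathbb{R}^n$ and $\nu$ a Borel probability measure on $E$. Let $\rho=(\mathrm{Id}\times p_E)_\#\mu$ (a transference plan between $\mu$ and $(p_E)_\#\mu$) and let $\sigma$ be an optimal transference plan between $(p_E)_\#\mu$ and $\nu$ for the quadratic cost. If $\mathrm{Spt}((p_E)_\#\mu)$ is compact, then for every gluing $\Gamma$ of $\rho$ and $\sigma$, the measure $\pi^{13}_\#\Gamma$ is an optimal transference plan between $\mu$ and $\nu$ for the quadratic cost $|x-z|^2$.
   Context: Transference plans between probability measures $\mu_1,\mu_2$ are probability measures on the product with marginals $\mu_1,\mu_2$; optimal for the quadratic cost means minimizing $\int|x-y|^2\,d\rho(x,y)$ among them. Given probability measures $\mu_i$ on $X_i$ ($i=1,2,3$), a transference plan $\rho_{12}$ between $\mu_1,\mu_2$ and $\rho_{23}$ between $\mu_2,\mu_3$, a gluing of $\rho_{12}$ and $\rho_{23}$ is a probability measure $\Gamma$ on $X_1\times X_2\times X_3$ whose marginals on $X_1\times X_2$ and $X_2\times X_3$ are $\rho_{12}$ and $\rho_{23}$. Here $\pi^{13}(x_1,x_2,x_3)=(x_1,x_3)$. Here $X_1=\mathbb{R}^n$, $X_2=X_3=E$. *)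

From HB Require Import structures.
From mathcomp Require Import all_boot all_order all_algebra.
From mathcomp Require Import all_classical all_reals all_analysis.
Set Implicit Arguments. Unset Strict Implicit. Unset Printing Implicit Defensive.
Import Order.TTheory GRing.Theory Num.Theory numFieldTopology.Exports numFieldNormedType.Exports.
Local Open Scope classical_set_scope.
Local Open Scope ring_scope.

(* R^n as row vectors; the Borel sigma-algebra is the one generated by the
   open sets of the (canonical, product) topology of 'rV[R]_n. *)
Definition Rn (R : realType) (n : nat) :=
  g_sigma_algebraType [set U : set 'rV[R]_n | open U].

Definition dotv (R : realType) (n : nat) (x y : 'rV[R]_n) : R :=
  \sum_(i < n) x ord0 i * y ord0 i.

Definition sqdist (R : realType) (n : nat) (x y : 'rV[R]_n) : R :=
  \sum_(i < n) (x ord0 i - y ord0 i) ^+ 2.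

Definition is_orth_proj (R : realType) (n : nat) (E : {vspace 'rV[R]_n})
    (p : 'rV[R]_n -> 'rV[R]_n) : Prop :=
  forall x, p x \in E /\ (forall y, y \in E -> dotv (x - p x) y = 0).

Definition msupport (R : realType) (n : nat) (m : set (Rn R n) -> \bar R)
    : set 'rV[R]_n :=
  [set x | forall U : set 'rV[R]_n, open U -> U x -> (0 < m U)%E].

Definition is_plan (R : realType) (n : nat)
    (m1 m2 : set (Rn R n) -> \bar R) (g : set (Rn R n * Rn R n)%type -> \bar R)
    : Prop :=
  (forall A : set (Rn R n), measurable A -> g (A `*` setT) = m1 A) /\
  (forall B : set (Rn R n), measurable B -> g (setT `*` B) = m2 B).

Definition qcost (R : realType) (n : nat) (z : Rn R n * Rn R n) : \bar R :=
  (sqdist z.1 z.2)%:E.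

Definition optimal_plan (R : realType) (n : nat)
    (m1 m2 : set (Rn R n) -> \bar R) (P : probability (Rn R n * Rn R n)%type R)
    : Prop :=
  is_plan m1 m2 P /\
  forall Q : probability (Rn R n * Rn R n)%type R, is_plan m1 m2 Q ->
    (\int[P]_z qcost z <= \int[Q]_z qcost z)%E.

From HB Require Import structures.
From mathcomp Require Import all_boot all_order all_algebra.
From mathcomp Require Import all_classical all_reals all_analysis.
From mathcomp Require Import measurable_realfun ring lra.
Set Implicit Arguments. Unset Strict Implicit. Unset Printing Implicit Defensive.
Import Order.TTheory GRing.Theory Num.Theory numFieldTopology.Exports numFieldNormedType.Exports.
Local Open Scope classical_set_scope.
Local Open Scope ring_scope.

(* For z in E, Pythagoras gives |x - z|^2 = |x - p x|^2 + |p x - z|^2.  Since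
   nu lives on E, the cost of any plan Q between mu and nu is therefore
   int |x - p x|^2 dmu plus the cost of the plan (p × id)#Q between p#mu and
   nu, which is at least the cost of sigma.  For the glued plan P the second
   term is exactly the cost of sigma, because Gamma-almost surely the middle
   coordinate is the projection of the first one. *)

Section inner_product.
Variables (R : realType) (n : nat).
Implicit Types x y z : 'rV[R]_n.

Lemma dotvC x y : dotv x y = dotv y x.
Proof. by apply: eq_bigr => i _; rewrite mulrC. Qed.

Lemma dotvDl x y z : dotv (x + y) z = dotv x z + dotv y z.
Proof. by rewrite /dotv -big_split; apply: eq_bigr => i _; rewrite mxE mulrDl. Qed.

Lemma dotvBl x y z : dotv (x - y) z = dotv x z - dotv y z.
Proof.
rewrite dotvDl /dotv -sumrN; congr (_ + _).
by apply: eq_bigr => i _; rewrite mxE mulNr.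
Qed.

Lemma dotv_ge0 x : 0 <= dotv x x.
Proof. by apply: sumr_ge0 => i _; rewrite -expr2 sqr_ge0. Qed.

Lemma dotv_eq0 x : dotv x x = 0 -> x = 0.
Proof.
move=> /eqP; rewrite psumr_eq0 => [/allP x0|i _]; last by rewrite -expr2 sqr_ge0.
apply/rowP => i; apply/eqP; rewrite mxE -[_ == _]orbb -mulf_eq0.
exact: x0 (mem_index_enum _).
Qed.

Lemma dotvDD_orth x y : dotv x y = 0 ->
  dotv (x + y) (x + y) = dotv x x + dotv y y.
Proof.
move=> xy0; rewrite dotvDl !(dotvC _ (x + y)) !dotvDl (dotvC y x) xy0.
by rewrite add0r addr0.
Qed.

Lemma sqr_coord_le_dotv x (j : 'I_n) : x ord0 j ^+ 2 <= dotv x x.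
Proof.
rewrite /dotv (bigD1 j) //= expr2 lerDl.
by apply: sumr_ge0 => i _; rewrite -expr2 sqr_ge0.
Qed.

Lemma dotv_le_coord_bound x e : (forall j, `|x ord0 j| < e) ->
  dotv x x <= n%:R * e ^+ 2.
Proof.
move=> xe; rewrite -[n in n%:R]card_ord mulr_natl -sumr_const.
apply: ler_sum => i _; rewrite -expr2 -real_normK ?num_real //.
by apply: lerXn2r; rewrite ?nnegrE // (le_trans _ (ltW (xe i))).
Qed.

Lemma sqdistE x y : sqdist x y = dotv (x - y) (x - y).
Proof. by apply: eq_bigr => i _; rewrite !mxE expr2. Qed.

Lemma sqdist_ge0 x y : 0 <= sqdist x y.
Proof. by rewrite sqdistE dotv_ge0. Qed.

Lemma sqdistxx x : sqdist x x = 0.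
Proof. by rewrite sqdistE subrr; apply: big1 => i _; rewrite mxE mul0r. Qed.

Lemma sqdist_eq0 x y : sqdist x y = 0 -> x = y.
Proof. by rewrite sqdistE => /dotv_eq0 /eqP; rewrite subr_eq0 => /eqP. Qed.

End inner_product.

Lemma norm_lt_of_sqr_le (R : realFieldType) (k a d : R) :
  0 <= k -> 0 < d -> a ^+ 2 <= k * d ^+ 2 -> `|a| < (k + 1) * d.
Proof.
move=> k0 d0 akd; have kd0 : 0 < (k + 1) * d by rewrite mulr_gt0 ?ltr_pwDr.
rewrite -(@ltr_pXn2r _ 2) ?nnegrE ?(ltW kd0) // real_normK ?num_real //.
by apply: le_lt_trans akd _; rewrite exprMn ltr_pM2r ?exprn_gt0 //; nra.
Qed.

Section orthogonal_projection.
Variables (R : realType) (n : nat) (E : {vspace 'rV[R]_n}).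
Variable pE : 'rV[R]_n -> 'rV[R]_n.
Hypothesis hpE : is_orth_proj E pE.
Implicit Types x y z : 'rV[R]_n.

Lemma orth_proj_in x : pE x \in E. Proof. by case: (hpE x). Qed.

Lemma orth_proj_orth x y : y \in E -> dotv (x - pE x) y = 0.
Proof. by case: (hpE x) => _; apply. Qed.

Lemma orth_proj_id x : x \in E -> pE x = x.
Proof.
move=> xE; have dE : x - pE x \in E by rewrite memvB // orth_proj_in.
by have /dotv_eq0/eqP := orth_proj_orth x dE; rewrite subr_eq0 => /eqP.
Qed.

Lemma sqdist_orth_proj_eq0 x : (sqdist x (pE x) = 0) <-> (x \in E).
Proof.
split => [/sqdist_eq0 ->|/orth_proj_id ->]; [exact: orth_proj_in|exact: sqdistxx].
Qed.

Lemma sqdist_orth_proj x z : z \in E ->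
  sqdist x z = sqdist x (pE x) + sqdist (pE x) z.
Proof.
move=> zE; rewrite !sqdistE -dotvDD_orth ?addrA ?subrK //.
by rewrite orth_proj_orth // memvB // orth_proj_in.
Qed.

Lemma dotv_orth_proj_le x y :
  dotv (pE x - pE y) (pE x - pE y) <= dotv (x - y) (x - y).
Proof.
set w := (x - pE x) - (y - pE y).
have -> : x - y = w + (pE x - pE y) by apply/rowP => i; rewrite /w !mxE; ring.
have pxyE : pE x - pE y \in E by rewrite memvB // orth_proj_in.
rewrite [leRHS]dotvDD_orth ?lerDr ?dotv_ge0 //.
by rewrite /w dotvBl !orth_proj_orth // subrr.
Qed.

Lemma continuous_orth_proj : continuous pE.
Proof.
move=> u A /nbhs_ballP[e /= e0 eA]; apply/nbhs_ballP.
have n1_gt0 : 0 < n%:R + 1 :> R by rewrite ltr_pwDr.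
set d := e / (n%:R + 1).
have d0 : 0 < d by exact: divr_gt0.
exists d => // v [_ uv]; apply: eA; split => // i j; rewrite ord1 /ball /=.
have pEuv : (pE u - pE v) ord0 j ^+ 2 <= n%:R * d ^+ 2.
  apply: le_trans (sqr_coord_le_dotv _ _) _.
  apply: le_trans (dotv_orth_proj_le u v) _.
  by apply: dotv_le_coord_bound => l; rewrite !mxE; have := uv ord0 l.
rewrite !mxE in pEuv.
by rewrite -(divfK (lt0r_neq0 n1_gt0) e) mulrC norm_lt_of_sqr_le.
Qed.

End orthogonal_projection.

Section measurability.
Variables (R : realType) (n : nat).

Lemma measurable_coord (j : 'I_n) :
  measurable_fun [set: Rn R n] (fun x : Rn R n => x ord0 j).
Proof.
apply: (measurability _ (RGenOpens.measurableE R)).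
move=> _ [_ [a [b ->]] <-]; apply: sub_sigma_algebra; rewrite setTI.
have := (continuousP _).1 (@coord_continuous R 1 n ord0 j) `]a, b[%classic.
by apply; exact: interval_open.
Qed.

Lemma measurable_sqdist d (X : measurableType d) (f g : X -> Rn R n) :
  measurable_fun setT f -> measurable_fun setT g ->
  measurable_fun setT (fun t => sqdist (f t) (g t)).
Proof.
move=> mf mg; apply: measurable_sum => i; apply/measurable_funX/measurable_funB.
- exact: measurableT_comp (measurable_coord i) mf.
- exact: measurableT_comp (measurable_coord i) mg.
Qed.

Variables (E : {vspace 'rV[R]_n}) (pE : Rn R n -> Rn R n).
Hypothesis hpE : is_orth_proj E pE.

Lemma measurable_orth_proj : measurable_fun setT pE.
Proof.
apply: (measurability [set U : set (Rn R n) | open U]) => //.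
move=> _ [B oB <-]; apply: sub_sigma_algebra; rewrite setTI.
exact: (continuousP _).1 (continuous_orth_proj hpE) _ oB.
Qed.

Lemma measurable_subspace : measurable [set x : Rn R n | x \in E].
Proof.
have -> : [set x : Rn R n | x \in E] = (fun x => sqdist x (pE x)) @^-1` [set 0].
  by apply/seteqP; split => x /(sqdist_orth_proj_eq0 hpE).
rewrite -[X in measurable X]setTI.
apply: measurable_sqdist measurableT _ (measurable_set1 _) => //.
exact: measurable_orth_proj.
Qed.

End measurability.

Lemma ge0_integral_image d1 d2 (X : measurableType d1) (Y : measurableType d2)
    (R : realType) (m1 : {measure set X -> \bar R}) (m2 : {measure set Y -> \bar R})
    (phi : X -> Y) :
  measurable_fun setT phi -> (forall A, measurable A -> m2 A = m1 (phi @^-1` A)) ->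
  forall h : Y -> \bar R, measurable_fun setT h -> (forall y, (0 <= h y)%E) ->
  (\int[m2]_y h y = \int[m1]_x h (phi x))%E.
Proof.
move=> mphi m2E h mh h0.
rewrite (eq_measure_integral (pushforward m1 phi)) => [|A mA _]; last exact: m2E.
by rewrite ge0_integral_pushforward // preimage_setT.
Qed.

Section plan_cost.
Local Open Scope ereal_scope.
Variables (R : realType) (n : nat) (E : {vspace 'rV[R]_n}) (pE : Rn R n -> Rn R n).
Hypothesis hpE : is_orth_proj E pE.

Definition proj_fst (u : Rn R n * Rn R n) : Rn R n * Rn R n := (pE u.1, u.2).

Lemma measurable_proj_fst : measurable_fun setT proj_fst.
Proof.
apply: measurable_fun_pair measurable_snd.
exact: measurableT_comp (measurable_orth_proj hpE) measurable_fst.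
Qed.

Lemma measurable_qcost :
  measurable_fun setT (@qcost R n : Rn R n * Rn R n -> \bar R).
Proof. exact/measurable_EFinP/measurable_sqdist. Qed.

Lemma qcost_ge0 (u : Rn R n * Rn R n) : 0 <= qcost u.
Proof. by rewrite lee_fin sqdist_ge0. Qed.

Lemma qcost_split (u : Rn R n * Rn R n) : u.2 \in E ->
  qcost u = (sqdist u.1 (pE u.1))%:E + qcost (proj_fst u).
Proof. by move=> u2E; rewrite /qcost -EFinD -(sqdist_orth_proj hpE). Qed.

Lemma plan_qcost_split (mu nu : {measure set Rn R n -> \bar R})
    (Q : {measure set (Rn R n * Rn R n)%type -> \bar R}) :
  nu (~` [set x : Rn R n | x \in E]) = 0 -> is_plan mu nu Q ->
  \int[Q]_u qcost u =
  \int[mu]_x (sqdist x (pE x))%:E + \int[Q]_u qcost (proj_fst u).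
Proof.
move=> nuE [Q1 Q2].
have mE := measurable_subspace hpE.
have mpE := measurable_orth_proj hpE.
have mf : measurable_fun setT (fun x : Rn R n => (sqdist x (pE x))%:E).
  exact/measurable_EFinP/measurable_sqdist.
have mf1 : measurable_fun setT
    (fun u : Rn R n * Rn R n => (sqdist u.1 (pE u.1))%:E).
  exact/measurable_EFinP/measurable_sqdist/(measurableT_comp mpE).
have mg : measurable_fun setT (fun u => qcost (proj_fst u)).
  exact: measurableT_comp measurable_qcost measurable_proj_fst.
transitivity (\int[Q]_u ((sqdist u.1 (pE u.1))%:E + qcost (proj_fst u))).
  apply: ae_eq_integral => //; first exact: measurable_qcost.
    exact: emeasurable_funD.
  have QE : Q.-negligible (setT `*` ~` [set x : Rn R n | x \in E]).
    apply/negligibleP; first exact: measurableX (measurableC mE).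
    exact: eq_trans (Q2 _ (measurableC mE)) nuE.
  apply: negligibleS QE => u /= Q_ne; split=> // u2E.
  by apply: Q_ne => _; exact: qcost_split.
rewrite ge0_integralD // => [|u _|u _]; last 2 first.
- exact: (qcost_ge0 (u.1, pE u.1)).
- exact: qcost_ge0.
congr (_ + _); apply/esym/ge0_integral_image => // [A mA|x].
  by rewrite -Q1 //; congr (Q _); apply/seteqP; split => u /=; [case|split].
exact: (qcost_ge0 (x, pE x)).
Qed.

Lemma is_plan_proj_fst (mu nu : set (Rn R n) -> \bar R)
    (Q : set (Rn R n * Rn R n)%type -> \bar R) :
  is_plan mu nu Q -> is_plan (pushforward mu pE) nu (pushforward Q proj_fst).
Proof.
move=> [Q1 Q2]; split => [A mA|B mB]; last exact: Q2.
apply: Q1; rewrite -[X in measurable X]setTI; exact: measurable_orth_proj.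
Qed.

Lemma optimal_plan_le_proj_fst (mu nu : probability (Rn R n) R)
    (sigma Q : probability (Rn R n * Rn R n)%type R) :
  optimal_plan (pushforward mu pE) nu sigma -> is_plan mu nu Q ->
  \int[sigma]_u qcost u <= \int[Q]_u qcost (proj_fst u).
Proof.
move=> [_ sigma_opt] Q_plan.
pose X : {mfun _ >-> _} :=
  HB.pack proj_fst (isMeasurableFun.Build _ _ _ _ _ measurable_proj_fst).
apply: le_trans (sigma_opt (distribution Q X) _) _; first exact: is_plan_proj_fst.
by rewrite ge0_integral_distribution //; [exact: measurable_qcost|exact: qcost_ge0].
Qed.

End plan_cost.
Arguments measurable_qcost {R n}.

Section triple_projections.
Context {d1 d2 d3} {T1 : measurableType d1} {T2 : measurableType d2}
  {T3 : measurableType d3}.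

Lemma measurable_proj12 :
  measurable_fun setT (fun t : T1 * T2 * T3 => (t.1.1, t.1.2)).
Proof.
exact: measurable_fun_pair (measurableT_comp measurable_fst measurable_fst)
  (measurableT_comp measurable_snd measurable_fst).
Qed.

Lemma measurable_proj23 :
  measurable_fun setT (fun t : T1 * T2 * T3 => (t.1.2, t.2)).
Proof.
exact: measurable_fun_pair (measurableT_comp measurable_snd measurable_fst)
  measurable_snd.
Qed.

Lemma measurable_proj13 :
  measurable_fun setT (fun t : T1 * T2 * T3 => (t.1.1, t.2)).
Proof.
exact: measurable_fun_pair (measurableT_comp measurable_fst measurable_fst)
  measurable_snd.
Qed.

End triple_projections.

Section gluing.
Local Open Scope ereal_scope.
Variables (R : realType) (n : nat) (E : {vspace 'rV[R]_n}) (pE : Rn R n -> Rn R n).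
Hypothesis hpE : is_orth_proj E pE.
Local Notation T := (Rn R n * Rn R n * Rn R n)%type.
Local Notation p12 := (fun t : T => (t.1.1, t.1.2)).
Local Notation p23 := (fun t : T => (t.1.2, t.2)).
Local Notation p13 := (fun t : T => (t.1.1, t.2)).
Variables (mu nu : {measure set Rn R n -> \bar R}).
Variables (sigma P : {measure set (Rn R n * Rn R n)%type -> \bar R}).
Variable Gamma : {measure set T -> \bar R}.
Hypothesis hG12 : forall C, measurable C ->
  Gamma (p12 @^-1` C) = pushforward mu (fun x : Rn R n => (x, pE x)) C.
Hypothesis hG23 : forall C, measurable C -> Gamma (p23 @^-1` C) = sigma C.
Hypothesis hP : forall C, measurable C -> P C = Gamma (p13 @^-1` C).

Lemma gluing_is_plan : is_plan (pushforward mu pE) nu sigma -> is_plan mu nu P.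
Proof.
move=> [_ sigma2]; split => [A mA|B mB]; rewrite hP; try exact: measurableX.
- rewrite -[LHS]/(Gamma (p12 @^-1` (A `*` setT))) hG12; last exact: measurableX.
  by congr (mu _); apply/seteqP; split => x /=; [case|split].
- rewrite -[LHS]/(Gamma (p23 @^-1` (setT `*` B))) hG23 ?sigma2 //.
  exact: measurableX.
Qed.

Lemma gluing_qcost_proj_fst :
  \int[P]_u qcost (proj_fst pE u) = \int[sigma]_u qcost u.
Proof.
have mpE := measurable_orth_proj hpE.
have mqp := measurableT_comp measurable_qcost (measurable_proj_fst hpE).
rewrite (ge0_integral_image measurable_proj13 hP mqp) => [|u];
  last exact: qcost_ge0.
have -> : \int[Gamma]_t qcost (proj_fst pE (p13 t)) = \int[Gamma]_t qcost (p23 t).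
  apply: ae_eq_integral => //.
  - exact: measurableT_comp mqp measurable_proj13.
  - exact: measurableT_comp measurable_qcost measurable_proj23.
  set N := (fun u : Rn R n * Rn R n => sqdist u.2 (pE u.1)) @^-1` [set~ 0%R].
  have mN : measurable N.
    rewrite -[X in measurable X]setTI.
    apply: measurable_sqdist (measurableT_comp mpE measurable_fst) _ _ _ => //.
    exact: measurableC (measurable_set1 _).
  have N0 : Gamma.-negligible (p12 @^-1` N).
    apply/negligibleP.
      by rewrite -[X in measurable X]setTI; exact: measurable_proj12.
    apply: eq_trans (hG12 mN) _; rewrite /pushforward.
    suff -> : (fun x : Rn R n => (x, pE x)) @^-1` N = set0 by rewrite measure0.
    by apply/seteqP; split => x //=; rewrite /N /preimage /= sqdistxx.
  apply: negligibleS N0 => t /= neq; apply: contrapT => t2_pE; apply: neq => _.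
  by move/contrapT/sqdist_eq0: t2_pE => /= ->.
apply/esym/ge0_integral_image; first exact: measurable_proj23.
- by move=> C mC; rewrite hG23.
- exact: measurable_qcost.
- exact: qcost_ge0.
Qed.

End gluing.

Theorem mainTheorem4 (R : realType) (n : nat) (E : {vspace 'rV[R]_n})
  (pE : Rn R n -> Rn R n) (hpE : is_orth_proj E pE)
  (mu : probability (Rn R n) R)
  (nu : probability (Rn R n) R)
  (hnu : nu (~` [set x : Rn R n | x \in E]) = 0%E)
  (sigma : probability (Rn R n * Rn R n)%type R)
  (hsigma : optimal_plan (pushforward mu pE) nu sigma)
  (hspt : compact (msupport (pushforward mu pE)))
  (Gamma : probability (Rn R n * Rn R n * Rn R n)%type R)
  (hG12 : forall C : set (Rn R n * Rn R n)%type, measurable C ->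
     Gamma ((fun t : (Rn R n * Rn R n * Rn R n)%type => (t.1.1, t.1.2)) @^-1` C)
     = pushforward mu (fun x : Rn R n => (x, pE x)) C)
  (hG23 : forall C : set (Rn R n * Rn R n)%type, measurable C ->
     Gamma ((fun t : (Rn R n * Rn R n * Rn R n)%type => (t.1.2, t.2)) @^-1` C)
     = sigma C)
  (P : probability (Rn R n * Rn R n)%type R)
  (hP : forall C : set (Rn R n * Rn R n)%type, measurable C ->
     P C = Gamma ((fun t : (Rn R n * Rn R n * Rn R n)%type => (t.1.1, t.2)) @^-1` C)) :
  optimal_plan mu nu P.
Proof.
have P_plan : is_plan mu nu P := gluing_is_plan hG12 hG23 hP hsigma.1.
split=> // Q Q_plan.
rewrite (plan_qcost_split hpE hnu P_plan) (plan_qcost_split hpE hnu Q_plan).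
rewrite (gluing_qcost_proj_fst hpE hG12 hG23 hP) leeD2l //.
exact (optimal_plan_le_proj_fst hpE hsigma Q_plan).
Qed.
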